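(* Let $n\ge 1$, $N=2n+1$, and let $H_N$ be the simply connected $(2n+1)$-dimensional Heisenberg group, whose Lie algebra $\mathfrak{n}$ has a basis $F_1,\dots,F_{2n},F_N$ with the only nonzero brackets $[F_i,F_{j+n}]=\delta_{ij}F_N$ for $1\le i,j\le n$ (so $[F_i,F_j]=[F_i,F_N]=[F_{i+n},F_{j+n}]=[F_{i+n},F_N]=0$). Let $g_2$ be the left-invariant Lorentzian metric with $g_2(F_1,F_1)=\cdots=g_2(F_{2n},F_{2n})=-g_2(F_N,F_N)=1$ and all other pairings of basis vectors equal to $0$. Then $g_2$ is a nilsoliton, and $(\mathfrak{n},g_2)$ admits a metric solvable extension which is an Einstein metric.
   Context: For a simply connected Lie group $G$ with Lie algebra $\mathfrak{g}$ and left-invariant pseudo-Riemannian metric $g$, $g$ is an algebraic Ricci soliton if $\mathrm{ric}=c\,\mathrm{Id}+D$ for some $c\in\mathbb{R}$ and some derivation $D$ of $\mathfrak{g}$, where $\mathrm{ric}$ is the Ricci operator ($g(\mathrm{ric}X,Y)=\mathrm{Ric}(X,Y)$); it is called a nilsoliton if $G$ is nilpotent and a solvsoliton if $G$ is solvable. A metric solvable extension of $(\mathfrak{n},g)$ is a solvable Lie algebra $\mathfrak{s}=\mathfrak{a}\oplus\mathfrak{n}$ (as vector spaces) with Lie bracket $[\cdot,\cdot]'$ and a pseudo-Riemannian inner product $\tilde g$ on $\mathfrak{s}$ such that $[\mathfrak{s},\mathfrak{s}]'=\mathfrak{n}=\mathfrak{a}^{\perp}$ (orthogonal complement w.r.t.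 $\tilde g$), $[X,Y]'=[X,Y]$ and $\tilde g(X,Y)=g(X,Y)$ for all $X,Y\in\mathfrak{n}$. Such an extension is Einstein if the corresponding left-invariant metric satisfies $\mathrm{Ric}(\tilde g)=\kappa\tilde g$ for a constant $\kappa$. *)

From HB Require Import structures.
From mathcomp Require Import all_boot all_order all_algebra.
From mathcomp Require Import reals.
Set Implicit Arguments. Unset Strict Implicit. Unset Printing Implicit Defensive.
Import Order.TTheory GRing.Theory Num.Theory.
Local Open Scope ring_scope.

(* A real Lie algebra of dimension m is modelled on row vectors 'rV[R]_m,
   with standard basis evec i, and bracket given by structure constants
   sc i j = [e_i, e_j] (so the bracket is automatically bilinear). *)
Definition evec (R : realType) (m : nat) (i : 'I_m) : 'rV[R]_m := delta_mx 0 i.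

Definition lbr (R : realType) (m : nat) (sc : 'I_m -> 'I_m -> 'rV[R]_m)
  (X Y : 'rV[R]_m) : 'rV[R]_m :=
  \sum_(i < m) \sum_(j < m) (X 0 i * Y 0 j) *: sc i j.

Definition is_lie (R : realType) (m : nat) (sc : 'I_m -> 'I_m -> 'rV[R]_m) : Prop :=
  (forall X, lbr sc X X = 0) /\
  (forall X Y Z, lbr sc X (lbr sc Y Z) + lbr sc Y (lbr sc Z X)
                 + lbr sc Z (lbr sc X Y) = 0).

(* Subspaces are represented by row spaces of matrices (mxalgebra). *)
Definition brspace (R : realType) (m : nat) (sc : 'I_m -> 'I_m -> 'rV[R]_m)
  (U W : 'M[R]_m) : 'M[R]_m :=
  (\sum_(i < m) \sum_(j < m) <<lbr sc (row i U) (row j W)>>)%MS.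

Definition lcs (R : realType) (m : nat) (sc : 'I_m -> 'I_m -> 'rV[R]_m) (k : nat)
  : 'M[R]_m := iter k (brspace sc 1%:M) 1%:M.
Definition derived (R : realType) (m : nat) (sc : 'I_m -> 'I_m -> 'rV[R]_m) (k : nat)
  : 'M[R]_m := iter k (fun U => brspace sc U U) 1%:M.

Definition nilpotent_lie (R : realType) (m : nat) (sc : 'I_m -> 'I_m -> 'rV[R]_m) : Prop :=
  exists k, (lcs sc k == (0 : 'M[R]_m))%MS.
Definition solvable_lie (R : realType) (m : nat) (sc : 'I_m -> 'I_m -> 'rV[R]_m) : Prop :=
  exists k, (derived sc k == (0 : 'M[R]_m))%MS.

Definition ip (R : realType) (m : nat) (G : 'M[R]_m) (X Y : 'rV[R]_m) : R :=
  (X *m G *m Y^T) 0 0.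

Definition pseudo_riem (R : realType) (m : nat) (G : 'M[R]_m) : Prop :=
  G^T = G /\ G \in unitmx.

(* Levi-Civita connection of the left-invariant metric (Koszul formula):
   2 g(nabla_X Y, Z) = g([X,Y],Z) - g([Y,Z],X) + g([Z,X],Y). *)
Definition nabla (R : realType) (m : nat) (sc : 'I_m -> 'I_m -> 'rV[R]_m)
  (G : 'M[R]_m) (X Y : 'rV[R]_m) : 'rV[R]_m :=
  (2^-1 *: \row_k (ip G (lbr sc X Y) (evec R k) - ip G (lbr sc Y (evec R k)) X
                   + ip G (lbr sc (evec R k) X) Y)) *m invmx G.

Definition curv (R : realType) (m : nat) (sc : 'I_m -> 'I_m -> 'rV[R]_m)
  (G : 'M[R]_m) (X Y Z : 'rV[R]_m) : 'rV[R]_m :=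
  nabla sc G X (nabla sc G Y Z) - nabla sc G Y (nabla sc G X Z)
  - nabla sc G (lbr sc X Y) Z.

Definition ricci_form (R : realType) (m : nat) (sc : 'I_m -> 'I_m -> 'rV[R]_m)
  (G : 'M[R]_m) : 'M[R]_m :=
  \matrix_(a < m, b < m) \sum_(i < m) (curv sc G (evec R i) (evec R a) (evec R b)) 0 i.

(* Ricci operator ric, g(ric X, Y) = Ric(X,Y); acting on rows: X |-> X *m ric_op *)
Definition ric_op (R : realType) (m : nat) (sc : 'I_m -> 'I_m -> 'rV[R]_m)
  (G : 'M[R]_m) : 'M[R]_m := ricci_form sc G *m invmx G.

Definition derivation (R : realType) (m : nat) (sc : 'I_m -> 'I_m -> 'rV[R]_m)
  (D : 'M[R]_m) : Prop :=
  forall X Y, lbr sc X Y *m D = lbr sc (X *m D) Y + lbr sc X (Y *m D).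

Definition alg_ricci_soliton (R : realType) (m : nat) (sc : 'I_m -> 'I_m -> 'rV[R]_m)
  (G : 'M[R]_m) : Prop :=
  exists (c : R) (D : 'M[R]_m), derivation sc D /\ ric_op sc G = c%:M + D.

Definition nilsoliton (R : realType) (m : nat) (sc : 'I_m -> 'I_m -> 'rV[R]_m)
  (G : 'M[R]_m) : Prop :=
  nilpotent_lie sc /\ alg_ricci_soliton sc G.

Definition einstein (R : realType) (m : nat) (sc : 'I_m -> 'I_m -> 'rV[R]_m)
  (G : 'M[R]_m) : Prop :=
  exists kappa : R, ricci_form sc G = kappa *: G.

(* s = a (+) n modelled on 'rV_(k + N): first k coordinates span a,
   last N coordinates are n (with its given basis). *)
Definition incl_n (R : realType) (k N : nat) (X : 'rV[R]_N) : 'rV[R]_(k + N) :=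
  row_mx 0 X.
Definition a_sp (R : realType) (k N : nat) : 'M[R]_(k, k + N) := row_mx 1%:M 0.
Definition n_sp (R : realType) (k N : nat) : 'M[R]_(N, k + N) := row_mx 0 1%:M.

Definition metric_solvable_ext (R : realType) (N : nat)
  (sc : 'I_N -> 'I_N -> 'rV[R]_N) (G : 'M[R]_N) (k : nat)
  (sc' : 'I_(k + N) -> 'I_(k + N) -> 'rV[R]_(k + N)) (G' : 'M[R]_(k + N)) : Prop :=
  is_lie sc' /\ solvable_lie sc' /\ pseudo_riem G' /\
      (brspace sc' 1%:M 1%:M == n_sp R k N)%MS /\
      (forall X : 'rV[R]_(k + N), (X <= n_sp R k N)%MS <->
         (forall Y : 'rV[R]_(k + N), (Y <= a_sp R k N)%MS -> ip G' X Y = 0)) /\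
      (forall X Y : 'rV[R]_N, lbr sc' (incl_n k X) (incl_n k Y) = incl_n k (lbr sc X Y)) /\
      (forall X Y : 'rV[R]_N, ip G' (incl_n k X) (incl_n k Y) = ip G X Y).

(* Heisenberg algebra of dimension 2n+1: index i (0-based) is F_(i+1),
   index 2n (= ord_max) is F_N.  [F_i, F_(i+n)] = F_N = -[F_(i+n), F_i]. *)
Definition heis_sc (R : realType) (n : nat) (i j : 'I_(n.*2.+1)) : 'rV[R]_(n.*2.+1) :=
  if ((i < n)%N && (nat_of_ord j == (nat_of_ord i + n)%N)) then evec R ord_max
  else if ((j < n)%N && (nat_of_ord i == (nat_of_ord j + n)%N)) then - evec R ord_max
  else 0.

Definition heis_g2 (R : realType) (n : nat) : 'M[R]_(n.*2.+1) :=
  \matrix_(i, j) (if i == j then (if i == ord_max then -1 else 1) else 0).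

From HB Require Import structures.
From mathcomp Require Import all_boot all_order all_algebra.
From mathcomp Require Import reals.
From mathcomp Require Import ring lra zify.
Set Implicit Arguments. Unset Strict Implicit. Unset Printing Implicit Defensive.
Import GRing.Theory Num.Theory.
Local Open Scope ring_scope.

(* Both (n, g2) and its Einstein extension belong to one family of metric Lie
   algebras on V + R ez + R ea, where P is the projection onto V, J a complex
   structure on V, and a(X), z(X) are the ea- and ez-coordinates of X:
     [X, Y] = t (a(X) YP - a(Y) XP) + (w(X, Y) + 2t (a(X) z(Y) - a(Y) z(X))) ez,
     g = g_V - a (x) a - z (x) z,      w(X, Y) = g_V(XJ, Y).
   Thus, when a(ea) = 1, ad ea acts by t on V and by 2t on ez.  The Levi-Civita
   connection has a closed form ([fnabla]), and expanding the curvature gives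
     Ric = (1/2 + 2t^2 (n+1)) g_V + (n/2 - 4t^2 (n+1)) z (x) z - 2t^2 (n+2) a (x) a.
   For t = 0, ea = 0 this is the Heisenberg algebra with g2, and
   ric - (n+2)/2 Id = -(n+1)/2 (Id_V + 2 Id_ez) is a derivation.  For t = 1/2 and
   g(ea, ea) = -1 the three coefficients are (n+2)/2 times those of g, so the
   extension R ea + n is Einstein. *)

Section Dot.
Variables (R : comPzRingType) (m : nat).
Implicit Types (c : 'cV[R]_m) (u v w : 'rV[R]_m) (M : 'M[R]_m).

Definition dot c u : R := (u *m c) 0 0.

Lemma dotDr c u v : dot c (u + v) = dot c u + dot c v.
Proof. by rewrite /dot mulmxDl mxE. Qed.
Lemma dotNr c u : dot c (- u) = - dot c u.
Proof. by rewrite /dot mulNmx mxE. Qed.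
Lemma dotZr c k u : dot c (k *: u) = k * dot c u.
Proof. by rewrite /dot -scalemxAl mxE. Qed.
Lemma dot0r c : dot c 0 = 0.
Proof. by rewrite /dot mul0mx mxE. Qed.
Lemma dot0l u : dot 0 u = 0.
Proof. by rewrite /dot mulmx0 mxE. Qed.

Lemma dot_mulmxr c M u : dot c (u *m M) = dot (M *m c) u.
Proof. by rewrite /dot mulmxA. Qed.

Lemma mx11_tr (A : 'M[R]_1) : A 0 0 = A^T 0 0.
Proof. by rewrite mxE. Qed.

Lemma dot_trC u w : dot w^T u = dot u^T w.
Proof. by rewrite /dot mx11_tr trmx_mul trmxK. Qed.

Lemma dot_rank1 c v u : u *m (c *m v) = dot c u *: v.
Proof. by rewrite -mul_scalar_mx -mx11_scalar mulmxA. Qed.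

End Dot.

Section RealRows.
Variables (R : realType) (m : nat).
Implicit Types (c : 'cV[R]_m) (u v w : 'rV[R]_m) (M : 'M[R]_m).

Lemma evec_mulmx p i (M : 'M[R]_(m, p)) j : (evec R i *m M) 0 j = M i j.
Proof. by rewrite /evec -rowE mxE. Qed.

Lemma ip_evec M u k : ip M u (evec R k) = (u *m M) 0 k.
Proof. by rewrite /ip /evec trmx_delta -colE mxE. Qed.

Lemma ipDl M u v w : ip M (u + v) w = ip M u w + ip M v w.
Proof. by rewrite /ip !mulmxDl mxE. Qed.
Lemma ipNl M u w : ip M (- u) w = - ip M u w.
Proof. by rewrite /ip !mulNmx mxE. Qed.
Lemma ipZl M k u w : ip M (k *: u) w = k * ip M u w.
Proof. by rewrite /ip -!scalemxAl mxE. Qed.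
Lemma ip0l M w : ip M 0 w = 0.
Proof. by rewrite /ip !mul0mx mxE. Qed.
Lemma ipDr M u v w : ip M w (u + v) = ip M w u + ip M w v.
Proof. by rewrite /ip linearD /= mulmxDr mxE. Qed.
Lemma ipNr M u w : ip M w (- u) = - ip M w u.
Proof. by rewrite /ip linearN /= mulmxN mxE. Qed.
Lemma ipZr M k u w : ip M w (k *: u) = k * ip M w u.
Proof. by rewrite /ip linearZ /= -scalemxAr mxE. Qed.
Lemma ip0r M w : ip M w 0 = 0.
Proof. by rewrite /ip trmx0 mulmx0 mxE. Qed.

Lemma ipBmx M N u w : ip (M - N) u w = ip M u w - ip N u w.
Proof.
have subE (A B : 'M[R]_1) : (A - B) 0 0 = A 0 0 - B 0 0 by rewrite !mxE.
by rewrite /ip mulmxBr mulmxBl subE.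
Qed.
Lemma ipNmx M u w : ip (- M) u w = - ip M u w.
Proof. by rewrite /ip mulmxN mulNmx mxE. Qed.

Lemma ip_trC M u w : ip M u w = ip M^T w u.
Proof. by rewrite /ip mx11_tr !trmx_mul trmxK mulmxA. Qed.

Lemma ip_mulmxl M N u w : ip M (u *m N) w = ip (N *m M) u w.
Proof. by rewrite /ip !mulmxA. Qed.

Lemma ip_dotl M u w : ip M u w = dot (M *m w^T) u.
Proof. by rewrite /ip /dot mulmxA. Qed.

Lemma ip_rank1 a b u w : ip (a^T *m b) u w = dot a^T u * dot b^T w.
Proof. by rewrite /ip dot_rank1 -scalemxAl mxE -/(dot w^T b) (dot_trC b). Qed.

Lemma sub_kermx_dot c u : (u <= kermx c)%MS = (dot c u == 0).
Proof.
rewrite sub_kermx; apply/eqP/eqP => [h | h]; first by rewrite /dot h mxE.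
by apply/rowP => i; rewrite ord1 [RHS]mxE -h.
Qed.

Definition vtrace (F : 'rV[R]_m -> 'rV[R]_m) : R := \sum_i (F (evec R i)) 0 i.

Lemma vtraceD F G : vtrace (fun X => F X + G X) = vtrace F + vtrace G.
Proof. by rewrite /vtrace -big_split; apply: eq_bigr => i _; rewrite mxE. Qed.

Lemma vtrace_dot k c v : vtrace (fun X => (k * dot c X) *: v) = k * dot c v.
Proof.
rewrite /vtrace [dot c v]/dot mxE mulr_sumr; apply: eq_bigr => i _.
by rewrite mxE /dot evec_mulmx; ring.
Qed.

Lemma vtrace_ip k M U v : vtrace (fun X => (k * ip M X U) *: v) = k * ip M v U.
Proof. by rewrite ip_dotl -vtrace_dot; apply: eq_bigr => i _; rewrite ip_dotl. Qed.

Lemma vtrace_mulmx k M : vtrace (fun X => k *: (X *m M)) = k * \tr M.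
Proof.
by rewrite /vtrace /mxtrace mulr_sumr; apply: eq_bigr => i _; rewrite mxE evec_mulmx.
Qed.

End RealRows.

Section BracketSpaces.
Variables (R : realType) (m : nat) (sc : 'I_m -> 'I_m -> 'rV[R]_m).

Lemma lbr_evec i j : lbr sc (evec R i) (evec R j) = sc i j.
Proof.
have evecE k l : (evec R k) 0 l = (l == k)%:R by rewrite !mxE eqxx.
rewrite /lbr (big_only1 i) // => [|k /negbTE ki _]; last first.
  by rewrite big1 // => l _; rewrite !evecE ki mul0r scale0r.
rewrite (big_only1 j) // => [|l /negbTE lj _]; last by rewrite !evecE lj mulr0 scale0r.
by rewrite !evecE !eqxx mulr1 scale1r.
Qed.

Lemma lbr_sub_brspace U W : (lbr sc U W <= brspace sc 1%:M 1%:M)%MS.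
Proof.
rewrite /lbr; apply: summx_sub => i _; apply: summx_sub => j _; apply: scalemx_sub.
apply: (sumsmx_sup i) => //; apply: (sumsmx_sup j) => //.
by rewrite genmxE !row1 -/(evec R i) -/(evec R j) lbr_evec.
Qed.

Lemma brspace_sub U W k (T : 'M[R]_(k, m)) :
    (forall X Y, (X <= U)%MS -> (Y <= W)%MS -> (lbr sc X Y <= T)%MS) ->
  (brspace sc U W <= T)%MS.
Proof.
move=> sub_T; apply/sumsmx_subP => i _; apply/sumsmx_subP => j _.
by rewrite genmxE; apply: sub_T; exact: row_sub.
Qed.

End BracketSpaces.

Definition gram (R : realType) (m : nat) (ea ez : 'rV[R]_m) (P : 'M[R]_m) : 'M[R]_m :=
  P - ea^T *m ea - ez^T *m ez.

Record family_axioms (R : realType) (m : nat) (ea ez : 'rV[R]_m) (P J : 'M[R]_m)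
    (t a2 n : R) : Prop := FamilyAxioms {
  fam_P_sym : P^T = P;
  fam_J_skew : J^T = - J;
  fam_mulPP : P *m P = P;
  fam_mulPJ : P *m J = J;
  fam_mulJP : J *m P = J;
  fam_mulJJ : J *m J = - P;
  fam_mul_eaP : ea *m P = 0;
  fam_mul_ezP : ez *m P = 0;
  fam_dot_ea_ea : dot ea^T ea = a2;
  fam_dot_ea_ez : dot ea^T ez = 0;
  fam_dot_ez_ea : dot ez^T ea = 0;
  fam_dot_ez_ez : dot ez^T ez = 1;
  (* needed for [fnabla] to satisfy the Koszul formula *)
  fam_t0_or_a2 : t = 0 \/ a2 = 1;
  fam_gram_invol : gram ea ez P *m gram ea ez P = 1%:M;
  fam_trace_P : \tr P = 2 * n;
  fam_trace_J : \tr J = 0 }.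

Section Family.
Variables (R : realType) (m : nat) (ea ez : 'rV[R]_m) (P J : 'M[R]_m) (t a2 n : R).
Variable F : family_axioms ea ez P J t a2 n.

Let P_sym := fam_P_sym F.
Let J_skew := fam_J_skew F.
Let mulPP := fam_mulPP F.
Let mulPJ := fam_mulPJ F.
Let mulJP := fam_mulJP F.
Let mulJJ := fam_mulJJ F.
Let mul_eaP := fam_mul_eaP F.
Let mul_ezP := fam_mul_ezP F.
Let dot_ea_ea := fam_dot_ea_ea F.
Let dot_ea_ez := fam_dot_ea_ez F.
Let dot_ez_ea := fam_dot_ez_ea F.
Let dot_ez_ez := fam_dot_ez_ez F.
Let gram_invol := fam_gram_invol F.
Let trace_P := fam_trace_P F.
Let trace_J := fam_trace_J F.

Local Notation acoord X := (dot ea^T X).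
Local Notation zcoord X := (dot ez^T X).
Local Notation pdot X Y := (ip P X Y).
Local Notation jdot X Y := (ip J X Y).
Local Notation G := (gram ea ez P).

Lemma mul_eaJ : ea *m J = 0. Proof. by rewrite -mulPJ mulmxA mul_eaP mul0mx. Qed.
Lemma mul_ezJ : ez *m J = 0. Proof. by rewrite -mulPJ mulmxA mul_ezP mul0mx. Qed.

Lemma pdotC u w : pdot u w = pdot w u.
Proof. by rewrite ip_trC P_sym. Qed.
Lemma jdotC u w : jdot u w = - jdot w u.
Proof. by rewrite ip_trC J_skew ipNmx. Qed.
Lemma jdotxx u : jdot u u = 0.
Proof. have := jdotC u u; lra. Qed.

Lemma acoordP u : acoord (u *m P) = 0.
Proof. by rewrite dot_mulmxr -P_sym -trmx_mul mul_eaP trmx0 dot0l. Qed.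
Lemma zcoordP u : zcoord (u *m P) = 0.
Proof. by rewrite dot_mulmxr -P_sym -trmx_mul mul_ezP trmx0 dot0l. Qed.
Lemma acoordJ u : acoord (u *m J) = 0.
Proof.
by rewrite dot_mulmxr -[J]opprK -J_skew mulNmx -trmx_mul mul_eaJ trmx0 oppr0 dot0l.
Qed.
Lemma zcoordJ u : zcoord (u *m J) = 0.
Proof.
by rewrite dot_mulmxr -[J]opprK -J_skew mulNmx -trmx_mul mul_ezJ trmx0 oppr0 dot0l.
Qed.

Lemma pdotPl u w : pdot (u *m P) w = pdot u w.
Proof. by rewrite ip_mulmxl mulPP. Qed.
Lemma pdotJl u w : pdot (u *m J) w = jdot u w.
Proof. by rewrite ip_mulmxl mulJP. Qed.
Lemma jdotPl u w : jdot (u *m P) w = jdot u w.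
Proof. by rewrite ip_mulmxl mulPJ. Qed.
Lemma jdotJl u w : jdot (u *m J) w = - pdot u w.
Proof. by rewrite ip_mulmxl mulJJ ipNmx. Qed.
Lemma pdotPr u w : pdot w (u *m P) = pdot w u.
Proof. by rewrite pdotC pdotPl pdotC. Qed.
Lemma pdotJr u w : pdot w (u *m J) = jdot u w.
Proof. by rewrite pdotC pdotJl. Qed.
Lemma jdotPr u w : jdot w (u *m P) = jdot w u.
Proof. by rewrite jdotC jdotPl -jdotC. Qed.
Lemma jdotJr u w : jdot w (u *m J) = pdot w u.
Proof. by rewrite jdotC jdotJl opprK pdotC. Qed.

Lemma pdot_eal w : pdot ea w = 0.
Proof. by rewrite /ip mul_eaP !mul0mx mxE. Qed.
Lemma pdot_ezl w : pdot ez w = 0.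
Proof. by rewrite /ip mul_ezP !mul0mx mxE. Qed.
Lemma jdot_eal w : jdot ea w = 0.
Proof. by rewrite /ip mul_eaJ !mul0mx mxE. Qed.
Lemma jdot_ezl w : jdot ez w = 0.
Proof. by rewrite /ip mul_ezJ !mul0mx mxE. Qed.
Lemma pdot_ear w : pdot w ea = 0.
Proof. by rewrite pdotC pdot_eal. Qed.
Lemma pdot_ezr w : pdot w ez = 0.
Proof. by rewrite pdotC pdot_ezl. Qed.
Lemma jdot_ear w : jdot w ea = 0.
Proof. by rewrite jdotC jdot_eal oppr0. Qed.
Lemma jdot_ezr w : jdot w ez = 0.
Proof. by rewrite jdotC jdot_ezl oppr0. Qed.

Lemma ip_gram u w : ip G u w = pdot u w - acoord u * acoord w - zcoord u * zcoord w.
Proof. by rewrite /gram !ipBmx !ip_rank1. Qed.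

Lemma gram_sym : G^T = G.
Proof. by rewrite /gram !linearB /= !trmx_mul !trmxK P_sym. Qed.

Lemma gram_unit : G \in unitmx.
Proof. by case: (mulmx1_unit gram_invol). Qed.

Lemma invmx_gram : invmx G = G.
Proof. by rewrite -[RHS]mul1mx -(mulVmx gram_unit) -mulmxA gram_invol mulmx1. Qed.

Lemma ip_gram_inj u v : (forall w, ip G u w = ip G v w) -> u = v.
Proof.
move=> huv; have : u *m G = v *m G by apply/rowP => k; rewrite -!ip_evec huv.
by move/(congr1 (mulmx^~ G)); rewrite -!mulmxA gram_invol !mulmx1.
Qed.

Definition fbr (X Y : 'rV[R]_m) : 'rV[R]_m :=
  t *: (acoord X *: (Y *m P) - acoord Y *: (X *m P))
  + (jdot X Y + 2 * t * (acoord X * zcoord Y - acoord Y * zcoord X)) *: ez.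

Definition fnabla (X Y : 'rV[R]_m) : 'rV[R]_m :=
  (- t * (pdot X Y - 2 * zcoord X * zcoord Y)) *: ea - (t * acoord Y) *: (X *m P)
  + (zcoord X / 2) *: (Y *m J) + (zcoord Y / 2) *: (X *m J)
  + (jdot X Y / 2 - 2 * t * acoord Y * zcoord X) *: ez.

Ltac vec_simpl := rewrite ?(mulmxDl, mulNmx, mul0mx) -?scalemxAl -?mulmxA
  ?(mulPP, mulPJ, mulJP, mulJJ, mul_eaP, mul_ezP, mul_eaJ, mul_ezJ, mulmxN, mulmx0).

Ltac coord_simpl := rewrite ?(dotDr, dotNr, dotZr, dot0r,
  ipDl, ipNl, ipZl, ip0l, ipDr, ipNr, ipZr, ip0r, acoordP, zcoordP, acoordJ, zcoordJ,
  pdotPl, pdotJl, jdotPl, jdotJl, pdotPr, pdotJr, jdotPr, jdotJr,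
  pdot_eal, pdot_ezl, jdot_eal, jdot_ezl, pdot_ear, pdot_ezr, jdot_ear, jdot_ezr,
  dot_ea_ea, dot_ea_ez, dot_ez_ea, dot_ez_ez, jdotxx).

Ltac fam_field := first [ by field; rewrite ?pnatr_eq0
  | by case: (fam_t0_or_a2 F) => ->; field; rewrite ?pnatr_eq0 ].

Lemma koszul_fnabla X Y W :
  2 * ip G (fnabla X Y) W = ip G (fbr X Y) W - ip G (fbr Y W) X + ip G (fbr W X) Y.
Proof.
rewrite !ip_gram /fnabla /fbr; vec_simpl; coord_simpl.
rewrite ?(pdotC Y X) ?(pdotC W X) ?(pdotC W Y) ?(jdotC Y X) ?(jdotC W X) ?(jdotC W Y).
fam_field.
Qed.

Ltac ip_gram_solve := apply: ip_gram_inj => W; rewrite !ip_gram /fbr /fnabla;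
  vec_simpl; coord_simpl; fam_field.

Lemma fbrDl u v w : fbr (u + v) w = fbr u w + fbr v w. Proof. ip_gram_solve. Qed.
Lemma fbrDr u v w : fbr w (u + v) = fbr w u + fbr w v. Proof. ip_gram_solve. Qed.
Lemma fbrZl k u w : fbr (k *: u) w = k *: fbr u w. Proof. ip_gram_solve. Qed.
Lemma fbrZr k u w : fbr w (k *: u) = k *: fbr w u. Proof. ip_gram_solve. Qed.
Lemma fbr0l w : fbr 0 w = 0. Proof. by have := fbrZl 0 0 w; rewrite !scale0r. Qed.
Lemma fbr0r w : fbr w 0 = 0. Proof. by have := fbrZr 0 0 w; rewrite !scale0r. Qed.

Variable sc : 'I_m -> 'I_m -> 'rV[R]_m.
Hypothesis sc_fbr : forall i j, sc i j = fbr (evec R i) (evec R j).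

Lemma lbr_fbr X Y : lbr sc X Y = fbr X Y.
Proof.
have -> : fbr X Y = fbr (\sum_i X 0 i *: evec R i) (\sum_j Y 0 j *: evec R j).
  by rewrite /evec -!row_sum_delta.
rewrite (big_morph (fun u => fbr u _) (fun u v => fbrDl u v _) (fbr0l _)).
rewrite /lbr; apply: eq_bigr => i _.
rewrite fbrZl (big_morph (fbr _) (fun u v => fbrDr u v _) (fbr0r _)) scaler_sumr.
by apply: eq_bigr => j _; rewrite fbrZr scalerA sc_fbr.
Qed.

Lemma nabla_fnabla X Y : nabla sc G X Y = fnabla X Y.
Proof.
have koszul : fnabla X Y *m G = 2^-1 *: \row_k (ip G (lbr sc X Y) (evec R k)
     - ip G (lbr sc Y (evec R k)) X + ip G (lbr sc (evec R k) X) Y).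
  apply/rowP => k; rewrite -ip_evec !mxE !lbr_fbr -koszul_fnabla.
  by field; rewrite ?pnatr_eq0.
by rewrite /nabla invmx_gram -koszul -mulmxA gram_invol mulmx1.
Qed.

Lemma acoord_fnabla U V : acoord (fnabla U V) = - t * (pdot U V - 2 * zcoord U * zcoord V) * a2.
Proof. rewrite /fnabla; coord_simpl; fam_field. Qed.
Lemma zcoord_fnabla U V : zcoord (fnabla U V) = jdot U V / 2 - 2 * t * acoord V * zcoord U.
Proof. rewrite /fnabla; coord_simpl; fam_field. Qed.
Lemma pdot_fnablal U V W :
  pdot (fnabla U V) W = - (t * acoord V) * pdot U W + zcoord U / 2 * jdot V W + zcoord V / 2 * jdot U W.
Proof. rewrite /fnabla; coord_simpl; fam_field. Qed.
Lemma jdot_fnablal U V W :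
  jdot (fnabla U V) W = - (t * acoord V) * jdot U W - zcoord U / 2 * pdot V W - zcoord V / 2 * pdot U W.
Proof. rewrite /fnabla; coord_simpl; fam_field. Qed.
Lemma pdot_fnablar U V W :
  pdot W (fnabla U V) = - (t * acoord V) * pdot U W + zcoord U / 2 * jdot V W + zcoord V / 2 * jdot U W.
Proof. by rewrite pdotC pdot_fnablal. Qed.
Lemma jdot_fnablar U V W :
  jdot W (fnabla U V) = t * acoord V * jdot U W + zcoord U / 2 * pdot V W + zcoord V / 2 * pdot U W.
Proof. rewrite jdotC jdot_fnablal; fam_field. Qed.

Lemma acoord_fbr U V : acoord (fbr U V) = 0.
Proof. rewrite /fbr; coord_simpl; fam_field. Qed.
Lemma zcoord_fbr U V : zcoord (fbr U V) = jdot U V + 2 * t * (acoord U * zcoord V - acoord V * zcoord U).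
Proof. rewrite /fbr; coord_simpl; fam_field. Qed.
Lemma pdot_fbrl U V W : pdot (fbr U V) W = t * (acoord U * pdot V W - acoord V * pdot U W).
Proof. rewrite /fbr; coord_simpl; fam_field. Qed.
Lemma jdot_fbrl U V W : jdot (fbr U V) W = t * (acoord U * jdot V W - acoord V * jdot U W).
Proof. rewrite /fbr; coord_simpl; fam_field. Qed.
Lemma pdot_fbrr U V W : pdot W (fbr U V) = t * (acoord U * pdot V W - acoord V * pdot U W).
Proof. by rewrite pdotC pdot_fbrl. Qed.
Lemma jdot_fbrr U V W : jdot W (fbr U V) = - (t * (acoord U * jdot V W - acoord V * jdot U W)).
Proof. by rewrite jdotC jdot_fbrl. Qed.

(* The curvature [curv sc G X Y Z] in normal form: every term is a vector times
   a coefficient linear in [X], so that its trace in [X] can be read off. *)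
Definition fcurv (X Y Z : 'rV[R]_m) : 'rV[R]_m :=
    (t ^+ 2 * (pdot Y Z - 4 * zcoord Y * zcoord Z) * acoord X) *: ea
  + (- t * zcoord Z * jdot X Y) *: ea
  + (- t * zcoord Y / 2 * jdot X Z) *: ea
  + (- t ^+ 2 * acoord Y * pdot X Z) *: ea
  + (t * (4 * t * acoord Y * zcoord Z + jdot Y Z / 2) * zcoord X) *: ea
  + (t * (4 * t * acoord Z * zcoord Y - jdot Y Z / 2) * acoord X) *: ez
  + (t * acoord Z * jdot X Y) *: ez
  + (t * acoord Y / 2 * jdot X Z) *: ez
  + ((4^-1 - 2 * t ^+ 2) * zcoord Y * pdot X Z) *: ez
  + ((t ^+ 2 * (2 * pdot Y Z - 4 * acoord Y * acoord Z) - pdot Y Z / 4) * zcoord X) *: ez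
  + (t * (acoord Y * zcoord Z - acoord Z * zcoord Y) / 2 + jdot Y Z / 4) *: (X *m J)
  + (- t * zcoord Z / 2 * acoord X) *: (Y *m J)
  + (- 4^-1 * jdot X Z) *: (Y *m J)
  + (t * acoord Z / 2 * zcoord X) *: (Y *m J)
  + (- t * zcoord Y * acoord X) *: (Z *m J)
  + (- 2^-1 * jdot X Y) *: (Z *m J)
  + (t * acoord Y * zcoord X) *: (Z *m J)
  + (t ^+ 2 * (pdot Y Z - acoord Y * acoord Z - 2 * zcoord Y * zcoord Z)
       + zcoord Y * zcoord Z / 4) *: (X *m P)
  + (t ^+ 2 * acoord Z * acoord X) *: (Y *m P)
  + (- t ^+ 2 * pdot X Z) *: (Y *m P)
  + ((2 * t ^+ 2 - 4^-1) * zcoord Z * zcoord X) *: (Y *m P).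

(* Stated for abstract [N] and [B] obeying the coordinate laws of [fnabla] and
   [fbr], so that rewriting never has to unfold the nested connection. *)
Lemma ip_fcurv (N B : 'rV[R]_m -> 'rV[R]_m -> 'rV[R]_m)
  (acoordN : forall U V, acoord (N U V) = - t * (pdot U V - 2 * zcoord U * zcoord V) * a2)
  (zcoordN : forall U V, zcoord (N U V) = jdot U V / 2 - 2 * t * acoord V * zcoord U)
  (pdotNl : forall U V W, pdot (N U V) W =
     - (t * acoord V) * pdot U W + zcoord U / 2 * jdot V W + zcoord V / 2 * jdot U W)
  (jdotNl : forall U V W, jdot (N U V) W =
     - (t * acoord V) * jdot U W - zcoord U / 2 * pdot V W - zcoord V / 2 * pdot U W)
  (pdotNr : forall U V W, pdot W (N U V) =
     - (t * acoord V) * pdot U W + zcoord U / 2 * jdot V W + zcoord V / 2 * jdot U W)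
  (jdotNr : forall U V W, jdot W (N U V) =
     t * acoord V * jdot U W + zcoord U / 2 * pdot V W + zcoord V / 2 * pdot U W)
  (acoordB : forall U V, acoord (B U V) = 0)
  (zcoordB : forall U V, zcoord (B U V) =
     jdot U V + 2 * t * (acoord U * zcoord V - acoord V * zcoord U))
  (pdotBl : forall U V W, pdot (B U V) W = t * (acoord U * pdot V W - acoord V * pdot U W))
  (jdotBl : forall U V W, jdot (B U V) W = t * (acoord U * jdot V W - acoord V * jdot U W))
  (pdotBr : forall U V W, pdot W (B U V) = t * (acoord U * pdot V W - acoord V * pdot U W))
  (jdotBr : forall U V W, jdot W (B U V) = - (t * (acoord U * jdot V W - acoord V * jdot U W)))
  X Y Z W :
  ip G (N X (N Y Z) - N Y (N X Z) - N (B X Y) Z) W = ip G (fcurv X Y Z) W.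
Proof.
rewrite !ip_gram /fcurv.
rewrite ?(acoordN, zcoordN, pdotNl, jdotNl, pdotNr, jdotNr,
          acoordB, zcoordB, pdotBl, jdotBl, pdotBr, jdotBr, dotDr, dotNr, dotZr,
          ipDl, ipNl, ipZl, ipDr, ipNr, ipZr).
coord_simpl.
rewrite ?(pdotC Y X) ?(pdotC Z X) ?(pdotC W X) ?(pdotC Z Y) ?(pdotC W Y) ?(pdotC W Z).
rewrite ?(jdotC Y X) ?(jdotC Z X) ?(jdotC W X) ?(jdotC Z Y) ?(jdotC W Y) ?(jdotC W Z).
fam_field.
Qed.

Lemma curv_fcurv X Y Z : curv sc G X Y Z = fcurv X Y Z.
Proof.
rewrite /curv !nabla_fnabla !lbr_fbr; apply: ip_gram_inj => W; apply: ip_fcurv.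
- exact: acoord_fnabla. - exact: zcoord_fnabla. - exact: pdot_fnablal.
- exact: jdot_fnablal. - exact: pdot_fnablar. - exact: jdot_fnablar.
- exact: acoord_fbr. - exact: zcoord_fbr. - exact: pdot_fbrl.
- exact: jdot_fbrl. - exact: pdot_fbrr. - exact: jdot_fbrr.
Qed.

Lemma vtrace_curv Y Z : vtrace (fun X => curv sc G X Y Z) =
  (2^-1 + 2 * t ^+ 2 * (n + 1)) * pdot Y Z
  + (n / 2 - 4 * t ^+ 2 * (n + 1)) * (zcoord Y * zcoord Z)
  - 2 * t ^+ 2 * (n + 2) * (acoord Y * acoord Z).
Proof.
have -> : vtrace (fun X => curv sc G X Y Z) = vtrace (fun X => fcurv X Y Z).
  by apply: eq_bigr => i _; rewrite curv_fcurv.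
rewrite /fcurv !vtraceD ?(vtrace_dot, vtrace_ip, vtrace_mulmx) trace_P trace_J.
coord_simpl; rewrite ?(pdotC Z Y) ?(jdotC Z Y).
fam_field.
Qed.

Lemma ricci_form_fam : ricci_form sc G =
  (2^-1 + 2 * t ^+ 2 * (n + 1)) *: P
  + (n / 2 - 4 * t ^+ 2 * (n + 1)) *: (ez^T *m ez)
  - (2 * t ^+ 2 * (n + 2)) *: (ea^T *m ea).
Proof.
apply/matrixP => i j.
have -> : ricci_form sc G i j = vtrace (fun X => curv sc G X (evec R i) (evec R j)).
  by rewrite mxE.
rewrite vtrace_curv ip_evec /dot !evec_mulmx !mxE !big_ord1 !mxE.
by ring.
Qed.

Lemma ip_fbr_jacobi (B : 'rV[R]_m -> 'rV[R]_m -> 'rV[R]_m)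
  (acoordB : forall U V, acoord (B U V) = 0)
  (zcoordB : forall U V, zcoord (B U V) =
     jdot U V + 2 * t * (acoord U * zcoord V - acoord V * zcoord U))
  (pdotBl : forall U V W, pdot (B U V) W = t * (acoord U * pdot V W - acoord V * pdot U W))
  (jdotBl : forall U V W, jdot (B U V) W = t * (acoord U * jdot V W - acoord V * jdot U W))
  (pdotBr : forall U V W, pdot W (B U V) = t * (acoord U * pdot V W - acoord V * pdot U W))
  (jdotBr : forall U V W, jdot W (B U V) = - (t * (acoord U * jdot V W - acoord V * jdot U W)))
  X Y Z W :
  ip G (B X (B Y Z) + B Y (B Z X) + B Z (B X Y)) W = 0.
Proof.
rewrite !ip_gram ?(acoordB, zcoordB, pdotBl, jdotBl, pdotBr, jdotBr, dotDr, ipDl).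
coord_simpl.
rewrite ?(pdotC Y X) ?(pdotC Z X) ?(pdotC W X) ?(pdotC Z Y) ?(pdotC W Y) ?(pdotC W Z).
rewrite ?(jdotC Y X) ?(jdotC Z X) ?(jdotC W X) ?(jdotC Z Y) ?(jdotC W Y) ?(jdotC W Z).
fam_field.
Qed.

Lemma lie_fam : is_lie sc.
Proof.
split=> [X | X Y Z]; rewrite !lbr_fbr; apply: ip_gram_inj => W.
  by rewrite !ip_gram /fbr; coord_simpl; fam_field.
rewrite ip0l; apply: ip_fbr_jacobi.
- exact: acoord_fbr. - exact: zcoord_fbr. - exact: pdot_fbrl.
- exact: jdot_fbrl. - exact: pdot_fbrr. - exact: jdot_fbrr.
Qed.

Lemma fbr_jdot_ez X Y : t * acoord X = 0 -> t * acoord Y = 0 -> fbr X Y = jdot X Y *: ez.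
Proof.
move=> tX tY; rewrite /fbr scalerBr !scalerA tX tY !scale0r subrr add0r.
have -> : 2 * t * (acoord X * zcoord Y - acoord Y * zcoord X)
          = 2 * (t * acoord X) * zcoord Y - 2 * (t * acoord Y) * zcoord X by ring.
by rewrite tX tY !mulr0 !mul0r subrr addr0.
Qed.

Lemma fam_solvable : solvable_lie sc.
Proof.
have br_ker X Y : (lbr sc X Y <= kermx ea^T)%MS by rewrite sub_kermx_dot lbr_fbr acoord_fbr.
have ker_br X Y : (X <= kermx ea^T)%MS -> (Y <= kermx ea^T)%MS -> (lbr sc X Y <= ez)%MS.
  rewrite !sub_kermx_dot lbr_fbr => /eqP aX /eqP aY.
  by rewrite fbr_jdot_ez ?aX ?aY ?mulr0 // scalemx_sub.
have ez_br X Y : (X <= ez)%MS -> (Y <= ez)%MS -> lbr sc X Y = 0.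
  case/sub_rVP=> c -> /sub_rVP[d ->].
  by rewrite lbr_fbr fbr_jdot_ez ?ipZl ?ipZr ?jdot_ezr ?dotZr ?dot_ea_ez ?mulr0 ?scale0r.
exists 3%N; apply/andP; split; last exact: sub0mx.
rewrite /derived /=; set D1 := brspace sc 1%:M 1%:M.
have D1_ker : (D1 <= kermx ea^T)%MS by apply: brspace_sub => X Y _ _; exact: br_ker.
have D2_ez : (brspace sc D1 D1 <= ez)%MS.
  by apply: brspace_sub => X Y sX sY; apply: ker_br; exact: submx_trans D1_ker.
apply: brspace_sub => X Y sX sY; rewrite ez_br ?sub0mx //; exact: submx_trans D2_ez.
Qed.

Section Nilpotent.
Hypothesis t0 : t = 0.

Lemma fbr_t0 X Y : fbr X Y = jdot X Y *: ez.
Proof. by rewrite fbr_jdot_ez // t0 mul0r. Qed.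

Lemma fam_nilpotent : nilpotent_lie sc.
Proof.
have br_ez X Y : lbr sc X Y = jdot X Y *: ez by rewrite lbr_fbr fbr_t0.
exists 2%N; apply/andP; split; last exact: sub0mx.
rewrite /lcs /=; apply: brspace_sub => X Y _ sY.
have /sub_rVP[c ->] : (Y <= ez)%MS.
  by apply: submx_trans sY _; apply: brspace_sub => U V _ _; rewrite br_ez scalemx_sub.
by rewrite br_ez ipZr jdot_ezr mulr0 scale0r sub0mx.
Qed.

Lemma mulmx_ric_op_shift u :
  u *m (ric_op sc G - ((n + 2) / 2)%:M) =
  2^-1 *: (u *m P) - (n / 2 * zcoord u) *: ez - ((n + 2) / 2) *: u.
Proof.
have mulmx_gram v : v *m G = v *m P - acoord v *: ea - zcoord v *: ez.
  by rewrite /gram !mulmxBr !dot_rank1.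
rewrite /ric_op ricci_form_fam invmx_gram mulmxBr mul_mx_scalar mulmxA mulmx_gram.
rewrite !mulmxDr !mulmxN -!scalemxAr !dot_rank1; vec_simpl.
by apply: ip_gram_inj => W; rewrite !ip_gram; coord_simpl; rewrite t0; field.
Qed.

Lemma fam_ricci_soliton : alg_ricci_soliton sc G.
Proof.
exists ((n + 2) / 2), (ric_op sc G - ((n + 2) / 2)%:M).
split; last by rewrite addrC subrK.
move=> X Y; rewrite !mulmx_ric_op_shift !lbr_fbr !fbr_t0.
by apply: ip_gram_inj => W; rewrite !ip_gram; vec_simpl; coord_simpl; field.
Qed.

End Nilpotent.

Lemma fam_einstein : t ^+ 2 = 4^-1 -> einstein sc G.
Proof.
move=> t2; exists ((n + 2) / 2); rewrite ricci_form_fam t2 /gram !scalerBr.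
have -> : 2^-1 + 2 * 4^-1 * (n + 1) = (n + 2) / 2 by field.
have -> : n / 2 - 4 * 4^-1 * (n + 1) = - ((n + 2) / 2) by field.
have -> : 2 * 4^-1 * (n + 2) = (n + 2) / 2 by field.
by rewrite scaleNr addrAC.
Qed.

Lemma ip_gram_ea X c : ip G X (c *: ea) = - (c * a2 * acoord X).
Proof. by rewrite ip_gram; coord_simpl; ring. Qed.

Lemma brspace_fam (tn0 : t != 0) (a21 : a2 = 1) : (brspace sc 1%:M 1%:M == kermx ea^T)%MS.
Proof.
apply/andP; split.
  by apply: brspace_sub => X Y _ _; rewrite sub_kermx_dot lbr_fbr acoord_fbr.
apply/row_subP => k; set v := row k _.
have /eqP av : dot ea^T v == 0 by rewrite -sub_kermx_dot row_sub.
have -> : v = fbr ea (t^-1 *: (v *m P) + (zcoord v / (2 * t)) *: ez).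
  apply: ip_gram_inj => W; rewrite !ip_gram pdot_fbrl acoord_fbr zcoord_fbr.
  by coord_simpl; rewrite av a21; field.
by rewrite -lbr_fbr lbr_sub_brspace.
Qed.

End Family.

Ltac bool_cases := repeat match goal with |- context [nat_of_bool ?b] =>
  lazymatch b with true => fail | false => fail | _ => let E := fresh "E" in case E: b end end.
Ltac bool_solve := bool_cases; rewrite /=; first [ring | exfalso; lia].

Section Heisenberg.
Variables (R : realType) (n : nat).
Local Notation N := n.*2.+1.
Local Notation eN := (evec R (@ord_max n.*2)).

Definition heis_P : 'M[R]_N := \matrix_(i, j) (((i : nat) == j) && (i < n.*2)%N)%:R.

Definition heis_J : 'M[R]_N := \matrix_(i, j)
  (((i < n)%N && ((j : nat) == i + n)%N)%:R - ((j < n)%N && ((i : nat) == j + n)%N)%:R).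

Lemma heis_P_sym : heis_P^T = heis_P.
Proof. by apply/matrixP => i j; rewrite !mxE eq_sym; bool_solve. Qed.

Lemma heis_J_skew : heis_J^T = - heis_J.
Proof. by apply/matrixP => i j; rewrite !mxE; ring. Qed.

Lemma heis_mulPP : heis_P *m heis_P = heis_P.
Proof.
apply/matrixP => i j; rewrite !mxE (big_only1 i) // => [|k ki _]; rewrite !mxE.
  by bool_solve.
by move: ki; rewrite -val_eqE /= => ki; bool_solve.
Qed.

Lemma heis_mulPJ : heis_P *m heis_J = heis_J.
Proof.
apply/matrixP => i j; rewrite !mxE (big_only1 i) // => [|k ki _]; rewrite !mxE.
  by have hi := ltn_ord i; have hj := ltn_ord j; bool_solve.
by move: ki; rewrite -val_eqE /= => ki; bool_solve.
Qed.

Lemma heis_mulJP : heis_J *m heis_P = heis_J.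
Proof.
apply/matrixP => i j; rewrite !mxE (big_only1 j) // => [|k kj _]; rewrite !mxE.
  by have hi := ltn_ord i; have hj := ltn_ord j; bool_solve.
by move: kj; rewrite -val_eqE /= => kj; bool_solve.
Qed.

Lemma heis_mulJJ : heis_J *m heis_J = - heis_P.
Proof.
apply/matrixP => i j; rewrite !mxE.
(* row [i] of [heis_J] has its only nonzero entry in column [i + n] or [i - n] *)
pose i' : 'I_N := inord (if (i < n)%N then (i + n)%N else (i - n)%N).
have val_i' : (i' : nat) = if (i < n)%N then (i + n)%N else (i - n)%N.
  by rewrite inordK //; have := ltn_ord i; case: ifP => h; lia.
rewrite (big_only1 i') // => [|k ki' _]; rewrite !mxE.
  by rewrite val_i'; have hi := ltn_ord i; have hj := ltn_ord j; case: ifP => hin; bool_solve.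
move: ki'; rewrite -val_eqE /= val_i' => ki'.
by have hi := ltn_ord i; case: ifP ki' => hin ki'; bool_solve.
Qed.

Lemma heis_mulNP : eN *m heis_P = 0.
Proof.
have max_N : (@ord_max n.*2 : nat) = n.*2 by [].
by apply/rowP => j; rewrite evec_mulmx !mxE; bool_solve.
Qed.

Lemma heis_dotNN : dot eN^T eN = 1.
Proof. by rewrite /dot evec_mulmx !mxE !eqxx. Qed.

Lemma heis_trace_P : \tr heis_P = 2 * n%:R.
Proof.
rewrite /mxtrace big_ord_recr /= !mxE eqxx ltnn /= addr0.
under eq_bigr => i _ do rewrite !mxE eqxx /= ltn_ord.
by rewrite sumr_const card_ord -mul2n natrM.
Qed.

Lemma heis_trace_J : \tr heis_J = 0.
Proof. by rewrite /mxtrace big1 // => i _; rewrite !mxE subrr. Qed.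

Lemma heis_g2_gram : heis_g2 R n = gram 0 eN heis_P.
Proof.
apply/matrixP => i j; rewrite /heis_g2 /gram trmx0 mul0mx subr0 !mxE big_ord1 !mxE -!val_eqE /=.
have max_N : (@ord_max n.*2 : nat) = n.*2 by [].
have hi := ltn_ord i; have hj := ltn_ord j.
by case: ifP => h1; [case: ifP => h2|]; bool_solve.
Qed.

Lemma heis_gram_invol : gram 0 eN heis_P *m gram 0 eN heis_P = 1%:M.
Proof.
have PE : heis_P *m (eN^T *m eN) = 0.
  by rewrite mulmxA -heis_P_sym -trmx_mul heis_mulNP trmx0 mul0mx.
have EP : eN^T *m eN *m heis_P = 0 by rewrite -mulmxA heis_mulNP mulmx0.
have EE : eN^T *m eN *m (eN^T *m eN) = eN^T *m eN.
  by rewrite -mulmxA dot_rank1 heis_dotNN scale1r.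
have PE1 : heis_P + eN^T *m eN = 1%:M.
  apply/matrixP => i j; rewrite !mxE big_ord1 !mxE -!val_eqE /=.
  have max_N : (@ord_max n.*2 : nat) = n.*2 by [].
  by have hi := ltn_ord i; have hj := ltn_ord j; bool_solve.
rewrite /gram trmx0 mul0mx subr0 mulmxBl !mulmxBr heis_mulPP PE EP EE.
by rewrite subr0 sub0r opprK PE1.
Qed.

Lemma heis_family : family_axioms 0 eN heis_P heis_J 0 0 n%:R.
Proof.
split; rewrite ?trmx0 ?mul0mx ?dot0l ?dot0r //.
- exact: heis_P_sym. - exact: heis_J_skew. - exact: heis_mulPP. - exact: heis_mulPJ.
- exact: heis_mulJP. - exact: heis_mulJJ. - exact: heis_mulNP. - exact: heis_dotNN.
- by left. - exact: heis_gram_invol. - exact: heis_trace_P. - exact: heis_trace_J.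
Qed.

Lemma heis_sc_fbr i j : @heis_sc R n i j = fbr 0 eN heis_P heis_J 0 (evec R i) (evec R j).
Proof.
rewrite fbr_jdot_ez ?mul0r // ip_evec evec_mulmx /heis_sc !mxE.
case: ifP => h1; [|case: ifP => h2]; bool_cases;
  first [exfalso; lia | by rewrite /= ?subr0 ?sub0r ?scale1r ?scaleN1r ?subrr ?scale0r].
Qed.

Lemma heis_nilsoliton : nilsoliton (@heis_sc R n) (heis_g2 R n).
Proof.
split; first exact: (fam_nilpotent heis_family heis_sc_fbr).
by rewrite heis_g2_gram; exact: (fam_ricci_soliton heis_family heis_sc_fbr).
Qed.

End Heisenberg.

Section Extension.
Variables (R : realType) (N : nat) (ez : 'rV[R]_N) (P J : 'M[R]_N) (n : R).
Hypothesis F : family_axioms 0 ez P J 0 0 n.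
Variable sc : 'I_N -> 'I_N -> 'rV[R]_N.
Hypothesis sc_fbr : forall i j, sc i j = fbr 0 ez P J 0 (evec R i) (evec R j).

Definition ext_mx (M : 'M[R]_N) : 'M[R]_(1 + N) := block_mx 0 0 0 M.

Local Notation ea' := (a_sp R 1 N).
Local Notation ez' := (incl_n 1 ez).
Local Notation P' := (ext_mx P).
Local Notation J' := (ext_mx J).

Ltac block_simpl :=
  rewrite ?(trmx0, trmx1, mulmx0, mul0mx, mulmx1, mul1mx, add0r, addr0, oppr0).

Definition ext_sc (t : R) (i j : 'I_(1 + N)) : 'rV[R]_(1 + N) :=
  fbr ea' ez' P' J' t (evec R i) (evec R j).

Lemma dot_a_sp_incl X : dot ea'^T (incl_n 1 X) = 0.
Proof. by rewrite /dot /a_sp /incl_n tr_row_mx mul_row_col; block_simpl; rewrite mxE. Qed.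

Lemma ip_ext_mx M X Y : ip (ext_mx M) (incl_n 1 X) (incl_n 1 Y) = ip M X Y.
Proof.
by rewrite /ip /ext_mx /incl_n tr_row_mx mul_row_block mul_row_col; block_simpl.
Qed.

Lemma gram_ext : gram ea' ez' P' = block_mx (- 1%:M) 0 0 (gram 0 ez P).
Proof.
rewrite /gram /a_sp /incl_n /ext_mx !tr_row_mx !mul_col_row; block_simpl.
by rewrite !opp_block_mx !add_block_mx; block_simpl.
Qed.

Lemma family_ext t : family_axioms ea' ez' P' J' t 1 n.
Proof.
case: F => P_sym J_skew mulPP mulPJ mulJP mulJJ _ mul_ezP _ _ _ dot_ez_ez _ gram_invol trP trJ.
have mul_block (M M' : 'M[R]_N) : ext_mx M *m ext_mx M' = ext_mx (M *m M').
  by rewrite /ext_mx mulmx_block; block_simpl.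
have dot_incl (X Y : 'rV[R]_N) : dot (incl_n 1 Y)^T (incl_n 1 X) = dot Y^T X.
  by rewrite /dot /incl_n tr_row_mx mul_row_col; block_simpl.
split; rewrite ?mul_block.
- by rewrite /ext_mx tr_block_mx P_sym; block_simpl.
- by rewrite /ext_mx tr_block_mx J_skew opp_block_mx; block_simpl.
- by rewrite mulPP.
- by rewrite mulPJ.
- by rewrite mulJP.
- by rewrite mulJJ /ext_mx opp_block_mx; block_simpl.
- by rewrite /a_sp /ext_mx mul_row_block; block_simpl; rewrite row_mx0.
- by rewrite /incl_n /ext_mx mul_row_block; block_simpl; rewrite mul_ezP row_mx0.
- by rewrite /dot /a_sp tr_row_mx mul_row_col; block_simpl; rewrite mxE.
- exact: dot_a_sp_incl.
- by rewrite /dot /incl_n /a_sp tr_row_mx mul_row_col; block_simpl; rewrite mxE.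
- by rewrite dot_incl.
- by right.
- rewrite gram_ext mulmx_block; block_simpl.
  by rewrite gram_invol mulNmx mulmxN mul1mx opprK -scalar_mx_block.
- by rewrite /ext_mx mxtrace_block mxtrace0 add0r trP.
- by rewrite /ext_mx mxtrace_block mxtrace0 add0r trJ.
Qed.

Lemma sub_n_sp (X : 'rV[R]_(1 + N)) : (X <= n_sp R 1 N)%MS = (X <= kermx ea'^T)%MS.
Proof.
rewrite sub_kermx_dot; apply/idP/eqP.
  by case/submxP => D ->; rewrite /n_sp mul_mx_row; block_simpl; rewrite dot_a_sp_incl.
rewrite -[X]hsubmxK /dot /a_sp tr_row_mx mul_row_col; block_simpl => X0.
have -> : lsubmx X = 0 by apply/rowP => i; rewrite ord1 [RHS]mxE.
by apply/submxP; exists (rsubmx X); rewrite /n_sp mul_mx_row; block_simpl.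
Qed.

Lemma lbr_ext_sc_incl t X Y :
  lbr (ext_sc t) (incl_n 1 X) (incl_n 1 Y) = incl_n 1 (lbr sc X Y).
Proof.
rewrite (lbr_fbr (family_ext t)) // (lbr_fbr F) // !fbr_jdot_ez ?dot_a_sp_incl ?mulr0 ?mul0r //.
by rewrite ip_ext_mx /incl_n scale_row_mx scaler0.
Qed.

Lemma ext_metric_solvable t : t != 0 ->
  metric_solvable_ext sc (gram 0 ez P) (ext_sc t) (gram ea' ez' P').
Proof.
move=> tn0; have Fe := family_ext t.
split; first exact: (lie_fam Fe).
split; first exact: (fam_solvable Fe).
split; first by split; [exact: (gram_sym Fe) | exact: (gram_unit Fe)].
split.
  have /andP[brs_ker ker_brs] := brspace_fam Fe (fun i j => erefl) tn0 erefl.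
  apply/andP; split; apply/row_subP => k.
    by rewrite sub_n_sp (submx_trans (row_sub k _) brs_ker).
  by apply: submx_trans ker_brs; rewrite -sub_n_sp row_sub.
split.
  move=> X; rewrite sub_n_sp sub_kermx_dot; split.
    by move=> /eqP aX Y /sub_rVP[c ->]; rewrite (ip_gram_ea Fe) aX mulr0 oppr0.
  move=> perp; have := perp ea' (submx_refl _).
  by rewrite -[ea' in ip _ _ ea']scale1r (ip_gram_ea Fe) !mul1r => /eqP; rewrite oppr_eq0.
split; first exact: lbr_ext_sc_incl.
by move=> X Y; rewrite gram_ext /ip /incl_n mul_row_block tr_row_mx mul_row_col; block_simpl.
Qed.

Lemma ext_einstein t : t ^+ 2 = 4^-1 -> einstein (ext_sc t) (gram ea' ez' P').
Proof. exact: (fam_einstein (family_ext t)). Qed.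

End Extension.

Theorem mainTheorem2 (R : realType) (n : nat) (hn : (1 <= n)%N) :
  nilsoliton (@heis_sc R n) (heis_g2 R n) /\
  exists (k : nat) (sc' : 'I_(k + n.*2.+1) -> 'I_(k + n.*2.+1) -> 'rV[R]_(k + n.*2.+1))
         (G' : 'M[R]_(k + n.*2.+1)),
    metric_solvable_ext (@heis_sc R n) (heis_g2 R n) sc' G' /\ einstein sc' G'.
Proof.
split; first exact: heis_nilsoliton.
exists 1%N, (ext_sc (evec R ord_max) (heis_P R n) (heis_J R n) 2^-1).
exists (gram (a_sp R 1 n.*2.+1) (incl_n 1 (evec R ord_max)) (ext_mx (heis_P R n))).
rewrite heis_g2_gram; split.
  by apply: (ext_metric_solvable (heis_family R n) (@heis_sc_fbr R n)); rewrite invr_eq0 pnatr_eq0.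
by apply: (ext_einstein (heis_family R n)); field.
Qed.
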